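(* Let $r$ be a prime power, $q=r^2$, and let $M$ be a positive integer with $M\mid(r+1)$. If there exist Hermitian self-orthogonal linear codes over $\mathbb{F}_q$ with parameters $[m,k_1,d_1]_q,[m,k_2,d_2]_q,\dots,[m,k_M,d_M]_q$, then there exists a Hermitian self-orthogonal linear code over $\mathbb{F}_q$ with parameters $[Mm,k_1+k_2+\cdots+k_M,d]_q$ where $d\ge\min\{Md_1,(M-1)d_2,\dots,d_M\}$ (i.e., $d\ge\min_{1\le i\le M}(M-i+1)d_i$).
   Context: For $a\in\mathbb{F}_q$, $\overline{a}:=a^r$. The Hermitian inner product on $\mathbb{F}_q^n$ is $\langle u,v\rangle_H=\sum_i u_i\overline{v_i}$; a linear code $C$ is Hermitian self-orthogonal if $C\subseteq C^{\perp_H}$. A code with parameters $[n,k,d]_q$ is a linear code of length $n$, dimension $k$ and minimum Hamming weight $d$ over $\mathbb{F}_q$. *)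

From HB Require Import structures.
From mathcomp Require Import all_boot all_order all_algebra all_field.
Set Implicit Arguments. Unset Strict Implicit. Unset Printing Implicit Defensive.
Import GRing.Theory.
Local Open Scope ring_scope.

Definition prime_power (r : nat) : Prop :=
  exists p e : nat, prime p /\ (0 < e)%N /\ r = (p ^ e)%N.

(* Hermitian inner product on F^n, conjugation a |-> a^r (F has r^2 elements) *)
Definition herm_ip (F : fieldType) (r n : nat) (u v : 'rV[F]_n) : F :=
  \sum_(i < n) u 0 i * (v 0 i) ^+ r.

Definition herm_self_orth (F : fieldType) (r n : nat) (C : {vspace 'rV[F]_n}) : Prop :=
  forall u v, u \in C -> v \in C -> herm_ip r u v = 0.

Definition wt (F : fieldType) (n : nat) (u : 'rV[F]_n) : nat :=
  #|[set i : 'I_n | u 0 i != 0]|.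

Definition min_dist (F : fieldType) (n : nat) (C : {vspace 'rV[F]_n}) (d : nat) : Prop :=
  (exists2 c, c \in C & (c != 0) && (wt c == d)) /\
  (forall c, c \in C -> c != 0 -> (d <= wt c)%N).

Definition code_params (F : fieldType) (n : nat) (C : {vspace 'rV[F]_n}) (k d : nat) : Prop :=
  \dim C = k /\ min_dist C d.

(* Let z be a primitive M-th root of unity in F (it exists because M | r + 1 | r^2 - 1)
   and V = (z^(l j)) the Vandermonde matrix on the nodes 1, z, ..., z^(M-1).  The code D
   consists of the words whose l-th block of length m is sum_j z^(l j) c_j, with c_j in C_j.
   Since z^r = z^-1, the Hermitian product of columns j and j' of V is the geometric sum
   sum_l (z^(j - j'))^l, which vanishes for j <> j'; hence D is Hermitian self-orthogonal
   because every C_j is.  V is invertible, so dim D = k_1 + ... + k_M.  Finally, if t is the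
   last index with c_t <> 0, then at every position p where c_t is nonzero the M entries of
   the blocks are the values at 1, z, ..., z^(M-1) of a nonzero polynomial of degree at most
   t, so at most t of them vanish and the word has weight at least (M - t) wt(c_t). *)

From mathcomp Require Import all_boot all_order all_algebra all_field cyclic zify.
Set Implicit Arguments. Unset Strict Implicit. Unset Printing Implicit Defensive.
Import GRing.Theory.
Local Open Scope ring_scope.

Lemma wt_mxvec (F : fieldType) n m (A : 'M[F]_(n, m)) :
  wt (mxvec A) = (\sum_(p < m) #|[set l | A l p != 0%R]|)%N.
Proof.
rewrite /wt -sum1_card big_mkcond (reindex _ (curry_mxvec_bij n m)) /=.
under [RHS]eq_bigr do rewrite -sum1_card big_mkcond /=.
rewrite exchange_big pair_big /=.
by apply: eq_bigr => -[l p] _; rewrite !inE mxvecE.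
Qed.

Lemma card_nonroots (R : idomainType) n (s : 'I_n -> R) (P : {poly R}) :
  injective s -> P != 0 -> (n - (size P).-1 <= #|[set l | ~~ root P (s l)]|)%N.
Proof.
move=> s_inj P0; set S := [set l | _].
have roots_lt : (#|~: S| < size P)%N.
  rewrite cardE -(size_map s); apply: max_poly_roots => //.
    by apply/allP=> y /mapP[l]; rewrite mem_enum !inE negbK => ? ->.
  by rewrite map_inj_uniq ?enum_uniq.
by have := cardsC S; rewrite card_ord; lia.
Qed.

Section Vandermonde.
Variables (F : fieldType) (n : nat) (a : 'rV[F]_n).
Hypothesis a_inj : injective (a 0).

Lemma Vandermonde_unitmx : Vandermonde n a \in unitmx.
Proof.
rewrite unitmxE det_Vandermonde unitfE; apply/prodf_neq0 => i _.
apply/prodf_neq0 => j /ltn_eqF ij; rewrite subr_eq0; apply: contraFN ij.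
by move/eqP/a_inj => ->.
Qed.

Lemma wt_Vandermonde_mul m (B : 'M[F]_(n, m)) (t : 'I_n) :
    (forall j : 'I_n, (t < j)%N -> row j B = 0) ->
  ((n - t) * wt (row t B) <= wt (mxvec ((Vandermonde n a)^T *m B)))%N.
Proof.
move=> B_top; rewrite wt_mxvec /wt -sum1_card big_distrr big_mkcond /=.
apply: leq_sum => p _; rewrite inE mxE; case: ifP => // Btp; rewrite muln1.
pose P := rVpoly (col p B)^T.
have P_t : P`_t = B t p by rewrite coef_rVpoly_ord !mxE.
have P_neq0 : P != 0 by apply: contraNneq Btp => P0; rewrite -P_t P0 coef0.
have size_P : (size P <= t.+1)%N.
  apply/leq_sizeP => j tj; rewrite coef_rVpoly; case: insubP => // i _ ij.
  have /rowP/(_ p) : row i B = 0 by apply: B_top; rewrite ij.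
  by rewrite !mxE.
have P_eval l : P.[a 0 l] = ((Vandermonde n a)^T *m B) l p.
  by rewrite horner_poly mxE; apply: eq_bigr => j _; rewrite valK !mxE mulrC.
have -> : [set l | ((Vandermonde n a)^T *m B) l p != 0] = [set l | ~~ root P (a 0 l)].
  by apply/setP => l; rewrite !inE /root P_eval.
apply: leq_trans (card_nonroots a_inj P_neq0).
by rewrite leq_sub2l // -subn1 leq_subLR add1n.
Qed.

End Vandermonde.

Lemma last_nonzero_row (F : fieldType) k m (B : 'M[F]_(k, m)) :
  B != 0 -> exists t : 'I_k, row t B != 0 /\ forall j : 'I_k, (t < j)%N -> row j B = 0.
Proof.
move=> B0; have [j0 Bj0] : exists j0, row j0 B != 0.
  apply/existsP; apply: contraNT B0 => /existsPn B0; apply/eqP/row_matrixP => j.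
  by rewrite row0; apply/eqP/negPn.
have [t Bt tmax] := @arg_maxnP _ j0 (fun j => row j B != 0) val Bj0.
exists t; split => // j tj; apply/eqP; apply: contraTT tj => Bj.
by rewrite -leqNgt; apply: tmax.
Qed.

Lemma mulmx_sum_col_row (R : pzRingType) n k m (A : 'M[R]_(n, k)) (B : 'M[R]_(k, m)) :
  A *m B = \sum_j col j A *m row j B.
Proof.
apply/matrixP => i p; rewrite mxE summxE; apply: eq_bigr => j _.
by rewrite !mxE big_ord1 !mxE.
Qed.

Section MatrixCode.
Variables (F : fieldType) (k m : nat) (A : 'M[F]_k) (C : 'I_k -> {vspace 'rV[F]_m}).

Definition kron_col j : 'Hom('rV[F]_m, 'rV[F]_(k * m)) := linfun (mxvec \o mulmx (col j A)).

(* The paper's code (A (x) I_m)(C_1 x ... x C_k), as a sum of subspaces so that its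
   dimension can be computed. *)
Definition mx_code : {vspace 'rV[F]_(k * m)} := (\sum_j (kron_col j @: C j))%VS.

Lemma kron_colE j c : kron_col j c = mxvec (col j A *m c).
Proof. by rewrite lfunE. Qed.

Lemma sum_kron_col (c : 'I_k -> 'rV[F]_m) :
  \sum_j kron_col j (c j) = mxvec (A *m \matrix_j c j).
Proof.
rewrite mulmx_sum_col_row linear_sum; apply: eq_bigr => j _.
by rewrite rowK kron_colE.
Qed.

Lemma kron_col_img_family (v : 'I_k -> 'rV[F]_(k * m)) :
    (forall j, v j \in (kron_col j @: C j)%VS) ->
  exists2 c : 'I_k -> 'rV_m, forall j, c j \in C j & forall j, v j = kron_col j (c j).
Proof.
move=> Cv; have /fin_all_exists[c Cc] : forall j, exists c, c \in C j /\ v j = kron_col j c.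
  by move=> j; have /memv_imgP[c ? ->] := Cv j; exists c.
by exists c => j; case: (Cc j).
Qed.

Lemma mx_codeP x :
  reflect (exists2 B, (forall j, row j B \in C j) & x = mxvec (A *m B)) (x \in mx_code).
Proof.
apply: (iffP memv_sumP) => [[v /(_ _ isT) Cv ->] | [B CB ->]].
  have [c Cc vc] := kron_col_img_family Cv.
  exists (\matrix_j c j) => [j|]; first by rewrite rowK.
  by rewrite -sum_kron_col; apply: eq_bigr => j _.
exists (fun j => kron_col j (row j B)) => [j _|]; first exact: memv_img.
by rewrite sum_kron_col; congr (mxvec (A *m _)); apply/row_matrixP => j; rewrite rowK.
Qed.

Lemma dim_mx_code : A \in unitmx -> \dim mx_code = (\sum_j \dim (C j))%N.
Proof.
move=> A_unit.
have mxvec_mul_eq0 (B : 'M_(k, m)) : mxvec (A *m B) = 0 -> B = 0.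
  by move/eqP; rewrite mxvec_eq0 => /eqP/(congr1 (mulmx (invmx A))); rewrite mulKmx ?mulmx0.
have ker0 j : lker (kron_col j) = 0%VS.
  apply/vspaceP => c; rewrite memv_ker memv0 kron_colE colE -mulmxA.
  apply/eqP/eqP => [/mxvec_mul_eq0 dc0 | ->]; last by rewrite !mulmx0 linear0.
  apply/rowP => p; have /matrixP/(_ j p) := dc0.
  by rewrite !mxE big_ord1 !mxE !eqxx mul1r.
have /directvP -> /= : directv mx_code.
  apply/directv_sum_independent => v /(_ _ isT) Cv; have [c _ vc] := kron_col_img_family Cv.
  rewrite (eq_bigr _ (fun j _ => vc j)) sum_kron_col => /mxvec_mul_eq0 c0 j _.
  by rewrite vc -(rowK c j) c0 row0 linear0.
by apply: eq_bigr => j _; rewrite limg_dim_eq // ker0 capv0.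
Qed.

End MatrixCode.

Lemma wt_Vandermonde_code (F : fieldType) n m (a : 'rV[F]_n) (C : 'I_n -> {vspace 'rV[F]_m})
    (d : 'I_n -> nat) x :
    injective (a 0) -> (forall j c, c \in C j -> c != 0 -> (d j <= wt c)%N) ->
    x \in mx_code (Vandermonde n a)^T C -> x != 0 ->
  exists t : 'I_n, ((n - t) * d t <= wt x)%N.
Proof.
move=> a_inj C_wt /mx_codeP[B CB ->] x0.
have [|t [Bt B_top]] := last_nonzero_row (B := B).
  by apply: contraNneq x0 => ->; rewrite mulmx0 linear0.
exists t; apply: leq_trans (wt_Vandermonde_mul a_inj B_top).
by rewrite leq_mul2l C_wt ?orbT.
Qed.

Section Hermitian.
Variables (F : fieldType) (r : nat).

Lemma herm_ip_mxvec n m (X Y : 'M[F]_(n, m)) :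
  herm_ip r (mxvec X) (mxvec Y) = \sum_l \sum_p X l p * Y l p ^+ r.
Proof.
rewrite /herm_ip (reindex _ (curry_mxvec_bij n m)) /= pair_big /=.
by apply: eq_bigr => -[l p] _; rewrite !mxvecE.
Qed.

Hypotheses (r_gt0 : (0 < r)%N) (conjD : {morph (fun x : F => x ^+ r) : a b / a + b}).

Lemma exprn_sum (I : Type) (s : seq I) (P : pred I) (f : I -> F) :
  (\sum_(i <- s | P i) f i) ^+ r = \sum_(i <- s | P i) f i ^+ r.
Proof. by apply: (big_morph _ conjD); rewrite expr0n gtn_eqF. Qed.

Lemma herm_ip_mxvec_mul n k m (A : 'M[F]_(n, k)) (B B' : 'M[F]_(k, m)) :
  herm_ip r (mxvec (A *m B)) (mxvec (A *m B')) =
  \sum_j \sum_j' (\sum_l A l j * A l j' ^+ r) * herm_ip r (row j B) (row j' B').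
Proof.
rewrite herm_ip_mxvec.
under eq_bigr do under eq_bigr do rewrite !mxE exprn_sum big_distrlr /=.
under [RHS]eq_bigr do under eq_bigr do rewrite big_distrlr /=.
rewrite pair_big [RHS]pair_big /=.
under eq_bigr do rewrite pair_big /=.
under [RHS]eq_bigr do rewrite pair_big /=.
rewrite exchange_big; apply: eq_bigr => -[j j'] _; apply: eq_bigr => -[l p] _ /=.
by rewrite !mxE exprMn mulrACA.
Qed.

Lemma herm_self_orth_mx_code k m (A : 'M[F]_k) (C : 'I_k -> {vspace 'rV[F]_m}) :
    (forall j j' : 'I_k, j != j' -> \sum_l A l j * A l j' ^+ r = 0) ->
  (forall j, herm_self_orth r (C j)) -> herm_self_orth r (mx_code A C).
Proof.
move=> A_orth C_orth _ _ /mx_codeP[B CB ->] /mx_codeP[B' CB' ->].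
rewrite herm_ip_mxvec_mul big1 // => j _; rewrite big1 // => j' _.
have [<-|jj'] := eqVneq j j'; first by rewrite (C_orth j) ?mulr0.
by rewrite A_orth ?mul0r.
Qed.

End Hermitian.

Lemma sum_expr_eq0 (F : fieldType) (w : F) n :
  w ^+ n = 1 -> w != 1 -> \sum_(i < n) w ^+ i = 0.
Proof.
move=> wn1 w_neq1; have /eqP := subrX1 w n.
by rewrite wn1 subrr eq_sym mulf_eq0 subr_eq0 (negPf w_neq1) => /eqP.
Qed.

Section PrimitiveRoot.
Variables (F : fieldType) (n : nat) (z : F).
Hypothesis z_prim : n.-primitive_root z.

Lemma prim_root_expr_inj : injective (fun l : 'I_n => z ^+ l).
Proof.
by move=> i j /eqP; rewrite (eq_prim_root_expr z_prim) !modn_small // => /eqP/val_inj.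
Qed.

Lemma herm_orth_Vandermonde_prim_root r (V := (Vandermonde n (\row_(l < n) z ^+ l))^T) :
  z ^+ r.+1 = 1 -> forall j j' : 'I_n, j != j' -> \sum_l V l j * V l j' ^+ r = 0.
Proof.
move=> zr1 j j' jj'; set w := z ^+ j * z ^+ j' ^+ r.
have V_w l : V l j * V l j' ^+ r = w ^+ l.
  by rewrite !mxE exprMn -!exprM [(l * j)%N]mulnC [(l * _)%N]mulnC.
rewrite (eq_bigr _ (fun l _ => V_w l)) sum_expr_eq0 //.
  by rewrite exprMn -!exprM ![(_ * n)%N]mulnC !exprM (prim_expr_order z_prim) !expr1n mulr1.
apply: contra_neq jj' => w1; apply: prim_root_expr_inj => /=.
by rewrite -[RHS]mul1r -w1 -mulrA -exprSr -exprM mulnC exprM zr1 expr1n mulr1.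
Qed.

End PrimitiveRoot.

Lemma finField_prim_root_exists (F : finFieldType) n :
  (n %| #|F|.-1)%N -> exists z : F, n.-primitive_root z.
Proof.
move=> n_dvd; suff [z z_prim] : exists z : F, #|F|.-1.-primitive_root z.
  by exists (z ^+ (#|F|.-1 %/ n)); apply: dvdn_prim_root.
have /hasP[z _ z_prim] : has #|F|.-1.-primitive_root (enum (predC1 (0 : F))).
  apply: has_prim_root; rewrite ?enum_uniq -?cardE ?cardC1 //.
    by rewrite -ltnS prednK ?finNzRing_gt1 // ltnW ?finNzRing_gt1.
  apply/allP => x; rewrite mem_enum unity_rootE => /= x0; apply/eqP/(mulIf x0).
  by rewrite -exprSr prednK ?expf_card ?mul1r // ltnW ?finNzRing_gt1.
by exists z.
Qed.

Lemma prime_power_gt0 r : prime_power r -> (0 < r)%N.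
Proof. by case=> p [e [p_pr [_ ->]]]; rewrite expn_gt0 prime_gt0. Qed.

Lemma expr_prime_powerD (F : finFieldType) r :
  prime_power r -> #|F| = (r ^ 2)%N -> {morph (fun x : F => x ^+ r) : a b / a + b}.
Proof.
case=> p [e [p_pr [_ ->]]] F_card a b /=.
have p_char : p \in [pchar F] by apply: (card_finPcharP (n := (e * 2)%N)); rewrite // expnM.
by apply: exprDn_pchar; rewrite pnatX (pnatE _ p_pr) p_char.
Qed.

Lemma dvdn_succ_sqr_pred r : (r.+1 %| (r ^ 2).-1)%N.
Proof. by rewrite -subn1 -[1%N](exp1n 2) subn_sqr addn1 dvdn_mull. Qed.

Lemma min_dist_exists (F : finFieldType) n (U : {vspace 'rV[F]_n}) :
  U != 0%VS -> exists d, min_dist U d.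
Proof.
rewrite -vpick0 => U0.
pose P d := [exists x, [&& x \in U, x != 0 & wt x == d]].
have P_wt : P (wt (vpick U)) by apply/existsP; exists (vpick U); rewrite memv_pick U0 eqxx.
have [d] := ex_minnP (ex_intro P _ P_wt).
rewrite /P => /existsP[x /and3P[Ux x0 /eqP wx]] d_min.
exists d; split; first by exists x => //; rewrite x0 wx eqxx.
by move=> c Uc c0; apply: d_min; apply/existsP; exists c; rewrite Uc c0 eqxx.
Qed.

Lemma min_dist_dimv_gt0 (F : fieldType) n (U : {vspace 'rV[F]_n}) d :
  min_dist U d -> (0 < \dim U)%N.
Proof.
case=> -[c Uc /andP[c0 _]] _; rewrite lt0n dimv_eq0.
by apply: contraNneq c0 => U0; rewrite -memv0 -U0.
Qed.

Theorem corollary4p2 (F : finFieldType) (r : nat) (hr : prime_power r)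
  (hq : #|F| = (r ^ 2)%N) (M m : nat) (hM : (0 < M)%N) (hMr : (M %| r.+1)%N)
  (k d : 'I_M -> nat) (C : 'I_M -> {vspace 'rV[F]_m})
  (hC : forall i, herm_self_orth r (C i) /\ code_params (C i) (k i) (d i)) :
  exists (D : {vspace 'rV[F]_(M * m)}) (dD : nat),
    herm_self_orth r D /\ code_params D (\sum_(i < M) k i)%N dD /\
    (exists i : 'I_M, ((M - i) * d i <= dD)%N).
Proof.
have [z z_prim] : exists z : F, M.-primitive_root z.
  by apply: finField_prim_root_exists; rewrite hq (dvdn_trans hMr) ?dvdn_succ_sqr_pred.
have zr1 : z ^+ r.+1 = 1 by apply/eqP; rewrite -(prim_order_dvd z_prim).
pose a := \row_(l < M) z ^+ l.
have a_inj : injective (a 0) by move=> i j; rewrite !mxE; apply: prim_root_expr_inj.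
pose D := mx_code (Vandermonde M a)^T C.
have dimD : \dim D = (\sum_i k i)%N.
  rewrite dim_mx_code ?unitmx_tr ?Vandermonde_unitmx //.
  by apply: eq_bigr => i _; case: (hC i) => _ [].
have D0 : D != 0%VS.
  rewrite -dimv_eq0 -lt0n dimD (bigD1 (Ordinal hM)) //= ltn_addr //.
  by case: (hC (Ordinal hM)) => _ [<-]; apply: min_dist_dimv_gt0.
have [dD dD_min] := min_dist_exists D0.
exists D, dD; split; last split.
- apply: (herm_self_orth_mx_code (prime_power_gt0 hr) (expr_prime_powerD hr hq)) => [|i].
    exact: herm_orth_Vandermonde_prim_root.
  by case: (hC i).
- by split.
- have [[x Dx /andP[x0 /eqP <-]] _] := dD_min.
  apply: wt_Vandermonde_code Dx x0 => // i.
  by case: (hC i) => _ [_ []].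
Qed.
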